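(* Let $G=x_0^4+x_1^4+x_2^4+x_3^4$ and $H=x_4^4+x_5^4+x_6^4+x_7^4+x_8^4+x_9^4$. If $K=\mathbb{Q}_2(\sqrt{2})$ with $\pi=\sqrt2$, or $K=\mathbb{Q}_2(\sqrt{10})$ with $\pi=\sqrt{10}$, then $F=G+\pi H$ has no nontrivial zero in $K^{10}$. If $K=\mathbb{Q}_2(\sqrt{-2})$ with $\pi=\sqrt{-2}$, or $K=\mathbb{Q}_2(\sqrt{-10})$ with $\pi=\sqrt{-10}$, then $F=G+(\pi+\pi^2)H$ has no nontrivial zero in $K^{10}$.
   Context: In each case $\pi$ is a uniformizer of the ring of integers of $K$. A nontrivial zero is a zero other than the all-zero vector. *)

From HB Require Import structures.
From mathcomp Require Import all_boot all_order all_algebra.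
Set Implicit Arguments. Unset Strict Implicit. Unset Printing Implicit Defensive.
Import Order.TTheory GRing.Theory Num.Theory.
Local Open Scope ring_scope.

(* A discrete valuation v : K^* -> Z (the value at 0 is irrelevant). *)
Definition dvaluation (K : fieldType) (v : K -> int) : Prop :=
  (forall x y : K, x != 0 -> y != 0 -> v (x * y) = v x + v y) /\
  (forall x y : K, x != 0 -> y != 0 -> x + y != 0 ->
     Num.min (v x) (v y) <= v (x + y)).

Definition residue_F2 (K : fieldType) (v : K -> int) : Prop :=
  forall x : K, x != 0 -> 0 <= v x -> 0 < v x \/ x = 1 \/ 0 < v (x - 1).

(* x and y agree to precision n for v (x = y means distance 0). *)
Definition vclose (K : fieldType) (v : K -> int) (x y : K) (n : int) : Prop :=
  x = y \/ n <= v (x - y).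

Definition v_complete (K : fieldType) (v : K -> int) : Prop :=
  forall s : nat -> K,
    (forall n : int, exists N : nat, forall i j : nat, (N <= i)%N -> (N <= j)%N ->
        vclose v (s i) (s j) n) ->
    exists l : K, forall n : int, exists N : nat, forall i : nat, (N <= i)%N ->
        vclose v (s i) l n.

(* For d in {2, 10, -2, -10} such a K is
   (isomorphic, as a valued field, to) Q_2(sqrt d) with pi = sqrt d. *)
Definition quad_ext_Q2 (K : fieldType) (v : K -> int) (pi : K) (d : int) : Prop :=
  dvaluation v /\ residue_F2 v /\ v_complete v /\
  pi != 0 /\ v pi = 1 /\ pi ^+ 2 = d%:~R.

Definition Gform (K : fieldType) (x : 'I_10 -> K) : K :=
  \sum_(i < 10 | (i < 4)%N) x i ^+ 4.
Definition Hform (K : fieldType) (x : 'I_10 -> K) : K :=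
  \sum_(i < 10 | (4 <= i)%N) x i ^+ 4.

Definition nontrivial_zero (K : fieldType) (F : ('I_10 -> K) -> K) (x : 'I_10 -> K) : Prop :=
  F x = 0 /\ exists i, x i != 0.

From HB Require Import structures.
From mathcomp Require Import all_boot all_order all_algebra.
From mathcomp Require Import zify ring.
Set Implicit Arguments. Unset Strict Implicit. Unset Printing Implicit Defensive.
Import Order.TTheory GRing.Theory Num.Theory.
Local Open Scope ring_scope.

(* Dividing a nonzero zero of F = G + gam H by a coordinate of least valuation
   gives a zero with integral coordinates, one of them a unit.  As pi^2 = d is
   twice a unit, v 2 = 2: an element a + b pi with a, b integers lies in
   pi^7 O_K iff 16 | a and 8 | b, and every integral element is congruent to
   such an a + b pi modulo pi^7.  Enumerating the residues of fourth powers
   shows that G(y) + gam H(z) is not in pi^7 O_K when some y_i is a unit.  If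
   no y_i is a unit, then y = pi w and F = pi (pi^3 G(w) + (gam / pi) H(z))
   with some z_i a unit, which the same enumeration excludes. *)

Section Valuation.
Variables (K : fieldType) (v : K -> int).
Hypothesis v_val : dvaluation v.

Lemma vM x y : x != 0 -> y != 0 -> v (x * y) = v x + v y.
Proof. exact: v_val.1. Qed.

Lemma v_min x y :
  x != 0 -> y != 0 -> x + y != 0 -> v x <= v (x + y) \/ v y <= v (x + y).
Proof. by move=> x0 y0 s0; apply/orP; rewrite -ge_min; apply: v_val.2. Qed.

Lemma v1 : v 1 = 0.
Proof.
have h : v 1 = v 1 + v 1 by rewrite -vM ?mulr1 ?oner_neq0.
lia.
Qed.

Lemma vN x : x != 0 -> v (- x) = v x.
Proof.
move=> x0; have N10 : (-1 : K) != 0 by rewrite oppr_eq0 oner_neq0.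
have := vM N10 N10; rewrite mulrNN mulr1 v1 => vN1.
by rewrite -mulN1r vM // (_ : v (-1) = 0) ?add0r //; lia.
Qed.

Lemma vX x n : x != 0 -> v (x ^+ n) = n%:Z * v x.
Proof.
move=> x0; elim: n => [|n IH]; first by rewrite expr0 v1 mul0r.
by rewrite exprS vM ?expf_neq0 // IH; lia.
Qed.

Lemma vV x : x != 0 -> v x^-1 = - v x.
Proof.
move=> x0; have := vM x0 (invr_neq0 x0); rewrite mulfV // v1; lia.
Qed.

Definition vge (x : K) (n : int) : Prop := x = 0 \/ n <= v x.

Definition vunit (x : K) : bool := (x != 0) && (v x == 0).

Lemma vge_neq0 x n : x != 0 -> vge x n -> n <= v x.
Proof. by move=> x0 [x_eq0|//]; rewrite x_eq0 eqxx in x0. Qed.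

Lemma vgeW x m n : vge x n -> m <= n -> vge x m.
Proof. by move=> [->|xn] mn; [left | right; apply: le_trans xn]. Qed.

Lemma vgeN x n : vge x n -> vge (- x) n.
Proof.
have [->|x0] := eqVneq x 0; first by rewrite oppr0.
by move=> /(vge_neq0 x0) xn; right; rewrite vN.
Qed.

Lemma vgeD x y n : vge x n -> vge y n -> vge (x + y) n.
Proof.
have [->|x0] := eqVneq x 0; first by rewrite add0r.
have [->|y0] := eqVneq y 0; first by rewrite addr0.
have [->|s0] := eqVneq (x + y) 0; first by left.
move=> /(vge_neq0 x0) xn /(vge_neq0 y0) yn; right.
by case: (v_min x0 y0 s0) => h; [apply: le_trans xn h | apply: le_trans yn h].
Qed.

Lemma vgeB x y n : vge x n -> vge y n -> vge (x - y) n.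
Proof. by move=> xn /vgeN; apply: vgeD. Qed.

Lemma vgeM x y m n : vge x m -> vge y n -> vge (x * y) (m + n).
Proof.
have [->|x0] := eqVneq x 0; first by rewrite mul0r; left.
have [->|y0] := eqVneq y 0; first by rewrite mulr0; left.
move=> /(vge_neq0 x0) xm /(vge_neq0 y0) yn; right.
by rewrite vM //; apply: lerD.
Qed.

Lemma vge1 : vge 1 0.
Proof. by right; rewrite v1. Qed.

Lemma vge_nat n : vge n%:R 0.
Proof. by elim: n => [|n IH]; [left | rewrite mulrS; apply: vgeD vge1 IH]. Qed.

Lemma vge_int m : vge m%:~R 0.
Proof.
case: m => n; first by rewrite -pmulrn; apply: vge_nat.
by rewrite NegzE mulrNz; apply: vgeN; rewrite -pmulrn; apply: vge_nat.
Qed.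

Lemma vge_nonunit x : vge x 0 -> ~~ vunit x -> vge x 1.
Proof.
have [->|x0] := eqVneq x 0; first by left.
by move=> /(vge_neq0 x0) x_ge0; rewrite /vunit x0 /= => vx_neq0; right; lia.
Qed.

Lemma vD_strict x y : x != 0 -> vge y (v x + 1) -> x + y != 0 /\ v (x + y) = v x.
Proof.
move=> x0; have [->|y0] := eqVneq y 0; first by rewrite addr0.
move=> /(vge_neq0 y0) xy.
have s0 : x + y != 0.
  apply: contraTneq xy => /eqP; rewrite addr_eq0 => /eqP ->.
  by rewrite vN // -ltNge ltrDl.
split=> //; have ny0 : - y != 0 by rewrite oppr_eq0.
have := v_min x0 y0 s0; have := v_min s0 ny0; rewrite addrK vN // => /(_ x0).
lia.
Qed.

Lemma exists_vmin_coord n (x : 'I_n -> K) i0 :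
  x i0 != 0 -> exists2 j, x j != 0 & forall i, vge (x i / x j) 0.
Proof.
move=> xi0.
have [j xj0 xj_min] := @arg_minP _ _ _ i0 (fun i => x i != 0) (fun i => v (x i)) xi0.
exists j => // i; have [->|xi] := eqVneq (x i) 0; first by rewrite mul0r; left.
by right; rewrite vM ?invr_neq0 // vV // subr_ge0 xj_min.
Qed.

End Valuation.

(* (a, b) stands for the residue of a + b pi modulo pi^7, which only depends
   on a mod 16 and b mod 8. *)
Definition res := (int * int)%type.

Definition res_add (p q : res) : res :=
  (((p.1 + q.1) %% 16)%Z, ((p.2 + q.2) %% 8)%Z).

Definition res_mul (d : int) (p q : res) : res :=
  (((p.1 * q.1 + d * (p.2 * q.2)) %% 16)%Z, ((p.1 * q.2 + p.2 * q.1) %% 8)%Z).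

Definition res_pow4 d p := let p2 := res_mul d p p in res_mul d p2 p2.

Definition res_eq0 (p : res) : bool := (16 %| p.1)%Z && (8 %| p.2)%Z.

Definition sumset (S T : seq res) : seq res := undup [seq res_add p q | p <- S, q <- T].

Definition quartic_residues d (unit : bool) : seq res :=
  undup [seq res_pow4 d (Posz a, Posz b) |
         a <- [seq a <- iota 0 16 | unit ==> odd a], b <- iota 0 8].

(* Residues of sums of n fourth powers of integral elements, at least one of
   which is a unit if [unit] holds. *)
Fixpoint quartic_sums d n (unit : bool) : seq res :=
  if n is n'.+1 then
    if unit then sumset (quartic_residues d true) (quartic_sums d n' false) ++
                 sumset (quartic_residues d false) (quartic_sums d n' true)
    else sumset (quartic_residues d false) (quartic_sums d n' false)
  else if unit then [::] else [:: (0, 0)].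

Definition res_anisotropic d (a : res) m (u : bool) (b : res) n (w : bool) : bool :=
  ~~ has res_eq0 (sumset (map (res_mul d a) (quartic_sums d m u))
                         (map (res_mul d b) (quartic_sums d n w))).

Lemma sumset_add S T p q : p \in S -> q \in T -> res_add p q \in sumset S T.
Proof. by move=> pS qT; rewrite mem_undup; apply: allpairs_f. Qed.

Lemma sum_pow_scale (R : comNzRingType) n k (x : 'I_n -> R) s :
  \sum_i (x i * s) ^+ k = s ^+ k * \sum_i x i ^+ k.
Proof. by rewrite mulr_sumr; apply: eq_bigr => i _; rewrite exprMn mulrC. Qed.

Section Ramified.
Variables (K : fieldType) (v : K -> int) (pi : K) (d : int).
Hypotheses (v_val : dvaluation v) (res_F2 : residue_F2 v).
Hypotheses (pi_neq0 : pi != 0) (v_pi : v pi = 1) (pi_sqr : pi ^+ 2 = d%:~R).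
Hypothesis d_twice_odd : exists k, d = 2 * (1 + 2 * k).
Local Notation vge := (vge v).
Local Notation vunit := (vunit v).

Lemma vge_pi_exp n : vge (pi ^+ n) n.
Proof. by right; rewrite vX // ?pi_neq0 // v_pi mulr1. Qed.

Lemma two_neq0 : (2 : K) != 0.
Proof.
apply: contraTneq (expf_neq0 2 pi_neq0) => two0.
case: d_twice_odd => k; rewrite pi_sqr => ->.
by rewrite intrM (_ : 2%:~R = 2 :> K) // two0 mul0r eqxx.
Qed.

Lemma v_two_gt0 : 0 < v 2.
Proof.
have v2_ge0 : 0 <= v 2 by apply: vge_neq0 two_neq0 (vge_nat v_val 2).
case: (res_F2 two_neq0 v2_ge0) => [//|[/eqP|]].
  by rewrite mulr2n -subr_eq0 addrK oner_eq0.
by rewrite mulr2n addrK (v1 v_val).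
Qed.

Lemma vunit_odd k : vunit (1 + 2 * k)%:~R.
Proof.
have two_vge : vge 2 1 by right; have := v_two_gt0; lia.
have two_k : vge (2 * k%:~R) (v 1 + 1).
  by apply: vgeW (vgeM v_val two_vge (vge_int v_val k)) _; rewrite (v1 v_val) addr0.
have [s0 vs] := vD_strict v_val (oner_neq0 K) two_k.
by rewrite /vunit intrD intrM s0 vs (v1 v_val).
Qed.

Lemma v_two : v 2 = 2.
Proof.
case: d_twice_odd => k dk; have /andP[odd0 /eqP v_odd] := vunit_odd k.
have := vX v_val 2 pi_neq0; rewrite pi_sqr v_pi dk intrM vM // ?two_neq0 // v_odd.
by rewrite addr0.
Qed.

Lemma vge_two_exp k : vge (2 ^+ k) (2 * k%:Z).
Proof. by right; rewrite vX ?two_neq0 // v_two mulrC. Qed.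

Definition emb (p : res) : K := p.1%:~R + p.2%:~R * pi.

Lemma embD p q : emb (p.1 + q.1, p.2 + q.2) = emb p + emb q.
Proof. by rewrite /emb /= !intrD; ring. Qed.

Lemma embM p q :
  emb p * emb q = emb (p.1 * q.1 + d * (p.2 * q.2), p.1 * q.2 + p.2 * q.1).
Proof. by rewrite /emb /= !intrD !intrM -pi_sqr; ring. Qed.

Lemma vge_emb p : vge (emb p) 0.
Proof.
apply: (vgeD v_val (vge_int v_val _)).
by apply: vgeW (vgeM v_val (vge_int v_val _) (vge_pi_exp 1)) _.
Qed.

Lemma pi_exp_emb n : exists p, pi ^+ n = emb p.
Proof.
elim: n => [|n [p pn]]; first by exists (1, 0); rewrite /emb /= mul0r addr0.
by exists (p.2 * d, p.1); rewrite exprS pn /emb /= intrM -pi_sqr; ring.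
Qed.

Definition res_of (s : K) (p : res) : Prop := vge (s - emb p) 7.

Lemma res_of_emb p : res_of (emb p) p.
Proof. by rewrite /res_of subrr; left. Qed.

Lemma res_of_mod s A B : res_of s (A, B) -> res_of s ((A %% 16)%Z, (B %% 8)%Z).
Proof.
rewrite /res_of.
have -> : s - emb ((A %% 16)%Z, (B %% 8)%Z) = s - emb (A, B) +
    ((A %/ 16)%Z%:~R * 2 ^+ 4 + (B %/ 8)%Z%:~R * 2 ^+ 3 * pi).
  by rewrite {2}(divz_eq A 16) {2}(divz_eq B 8) /emb /= !intrD !intrM; ring.
move=> sAB; apply: (vgeD v_val sAB); apply: (vgeD v_val).
  by apply: vgeW (vgeM v_val (vge_int v_val _) (vge_two_exp 4)) _.
have B_part := vgeM v_val (vge_int v_val (B %/ 8)%Z) (vge_two_exp 3).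
by apply: vgeW (vgeM v_val B_part (vge_pi_exp 1)) _.
Qed.

Lemma res_of_integral s p : res_of s p -> vge s 0.
Proof.
move=> sp; rewrite -(subrK (emb p) s).
by apply: (vgeD v_val (vgeW sp _) (vge_emb p)).
Qed.

Lemma res_of_add s t p q : res_of s p -> res_of t q -> res_of (s + t) (res_add p q).
Proof.
move=> sp tq; apply: res_of_mod.
rewrite /res_of embD (_ : _ - _ = (s - emb p) + (t - emb q)); last by ring.
exact: (vgeD v_val sp tq).
Qed.

Lemma res_of_mul s t p q : res_of s p -> res_of t q -> res_of (s * t) (res_mul d p q).
Proof.
move=> sp tq; apply: res_of_mod.
rewrite /res_of -embM (_ : _ - _ = (s - emb p) * t + emb p * (t - emb q)); last by ring.
apply: (vgeD v_val).
  by have := vgeM v_val sp (res_of_integral tq); rewrite addr0.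
by have := vgeM v_val (vge_emb p) tq; rewrite add0r.
Qed.

Lemma emb_approx x : vge x 0 -> forall n : nat, exists p, vge (x - emb p) n.
Proof.
move=> x_int; elim=> [|n [p xp]].
  by exists (0, 0); exact: (vgeB v_val x_int (vge_emb _)).
have [xp0|z0] := eqVneq (x - emb p) 0; first by exists p; rewrite xp0; left.
have [q pnq] := pi_exp_emb n.
have pn0 : pi ^+ n != 0 by rewrite expf_neq0 ?pi_neq0.
set z := x - emb p in z0 xp *; set w := z / pi ^+ n.
have w0 : w != 0 by rewrite mulf_neq0 ?invr_neq0.
have zw : z = w * pi ^+ n by rewrite /w mulfVK.
have vz : v z = v w + n%:Z by rewrite zw vM // vX ?pi_neq0 // v_pi mulr1.
have w_int : 0 <= v w by have := vge_neq0 z0 xp; rewrite vz; lia.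
have xpq : x - emb (p.1 + q.1, p.2 + q.2) = (w - 1) * pi ^+ n.
  by rewrite embD -pnq mulrBl -zw /z mul1r; ring.
case: (res_F2 w0 w_int) => [w_pos | [w1 | w1_pos]].
- by exists p; right; rewrite -/z vz; lia.
- by exists (p.1 + q.1, p.2 + q.2); rewrite xpq w1 subrr mul0r; left.
- exists (p.1 + q.1, p.2 + q.2); rewrite xpq.
  have w1_vge : vge (w - 1) 1 by right; rewrite -gtz0_ge1.
  by apply: vgeW (vgeM v_val w1_vge (vge_pi_exp n)) _; lia.
Qed.

Lemma res_of_small x : vge x 0 ->
  exists a b : nat, [/\ (a < 16)%N, (b < 8)%N & res_of x (Posz a, Posz b)].
Proof.
move=> /emb_approx/(_ 7)[[A B] xAB]; have := res_of_mod xAB.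
have A_ge0 : (0 <= A %% 16)%Z by apply: modz_ge0.
have B_ge0 : (0 <= B %% 8)%Z by apply: modz_ge0.
have A_lt : (A %% 16 < 16)%Z by apply: ltz_pmod.
have B_lt : (B %% 8 < 8)%Z by apply: ltz_pmod.
exists (absz (A %% 16)%Z), (absz (B %% 8)%Z); rewrite !gez0_abs //; split=> //; lia.
Qed.

Lemma dvd2_of_vge_emb A B : vge (emb (A, B)) 1 -> (2 %| A)%Z.
Proof.
have [/dvdz_mod0P //|A_odd] : (A %% 2 = 0 \/ A %% 2 = 1)%Z.
  by have := @modz_ge0 A 2 isT; have := @ltz_pmod A 2 isT; lia.
have -> : A = 1 + 2 * (A %/ 2)%Z by have := divz_eq A 2; lia.
have /andP[odd0 /eqP v_odd] := vunit_odd (A %/ 2)%Z.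
have Bpi : vge (B%:~R * pi) (v (1 + 2 * (A %/ 2)%Z)%:~R + 1).
  by rewrite v_odd add0r; apply: vgeW (vgeM v_val (vge_int v_val B) (vge_pi_exp 1)) _.
have [s0 vs] := vD_strict v_val odd0 Bpi.
by rewrite /emb /= => /(vge_neq0 s0); rewrite vs v_odd.
Qed.

Lemma emb_halve A B (n : int) : 0 <= n -> vge (emb (A, B)) (n + 2) ->
  exists a b, [/\ A = 2 * a, B = 2 * b & vge (emb (a, b)) n].
Proof.
move=> n_ge0 AB; have /dvdzP[a A2] : (2 %| A)%Z.
  by apply: (@dvd2_of_vge_emb A B); apply: vgeW AB _; lia.
subst A.
have Bpi : vge (B%:~R * pi) 2.
  have -> : B%:~R * pi = emb (a * 2, B) - 2 ^+ 1 * a%:~R.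
    by rewrite /emb /= intrM (_ : 2%:~R = 2 :> K) //; ring.
  have AB2 : vge (emb (a * 2, B)) 2 by apply: vgeW AB _; lia.
  have a2 : vge (2 ^+ 1 * a%:~R) 2.
    by apply: vgeW (vgeM v_val (vge_two_exp 1) (vge_int v_val a)) _.
  exact: (vgeB v_val AB2 a2).
have /dvdzP[b B2] : (2 %| B)%Z.
  apply: (@dvd2_of_vge_emb B 0); rewrite /emb /= mul0r addr0.
  have [->|B0] := eqVneq (B%:~R : K) 0; first by left.
  by right; have := vge_neq0 (mulf_neq0 B0 pi_neq0) Bpi; rewrite vM // v_pi; lia.
subst B; exists a, b; split; rewrite 1?mulrC //.
have two_emb : emb (a * 2, b * 2) = 2 * emb (a, b) by rewrite /emb /= !intrM; ring.
have [->|ab0] := eqVneq (emb (a, b)) 0; first by left.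
move: AB; rewrite two_emb => /(vge_neq0 (mulf_neq0 two_neq0 ab0)).
by rewrite vM ?two_neq0 // v_two => ab; right; lia.
Qed.

Lemma dvdz_of_vge_emb k A B :
  vge (emb (A, B)) (2 * k%:Z + 1) -> (2 ^+ k.+1 %| A)%Z /\ (2 ^+ k %| B)%Z.
Proof.
elim: k A B => [|k IH] A B AB.
  split; last exact: dvd1z.
  by apply: (@dvd2_of_vge_emb A B); apply: vgeW AB _.
have k_ge0 : 0 <= 2 * k%:Z + 1 by lia.
have AB2 : vge (emb (A, B)) (2 * k%:Z + 1 + 2) by apply: vgeW AB _; lia.
have [a [b [-> -> ab]]] := emb_halve k_ge0 AB2.
have [a_dvd b_dvd] := IH a b ab.
by split; rewrite exprS; apply: dvdz_mul.
Qed.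

Lemma res_of0 p : res_of 0 p -> res_eq0 p.
Proof.
case: p => A B; rewrite /res_of sub0r => /(vgeN v_val); rewrite opprK => AB.
by have [] := @dvdz_of_vge_emb 3 A B AB; rewrite /res_eq0 => -> ->.
Qed.

Lemma emb0 : emb (0, 0) = 0.
Proof. by rewrite /emb /= mulr0z mul0r addr0. Qed.

Lemma vge_emb_even A B : (2 %| A)%Z -> vge (emb (A, B)) 1.
Proof.
case/dvdzP=> a ->; rewrite /emb /= mulrC intrM (_ : 2%:~R = 2 ^+ 1 :> K) //.
apply: (vgeD v_val).
  by apply: vgeW (vgeM v_val (vge_two_exp 1) (vge_int v_val a)) _.
by apply: vgeW (vgeM v_val (vge_int v_val B) (vge_pi_exp 1)) _.
Qed.

Lemma quartic_residue_sound (u : bool) z : vge z 0 -> (u -> vunit z) ->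
  exists2 p, p \in quartic_residues d u & res_of (z ^+ 4) p.
Proof.
move=> z_int z_unit; have [a [b [a16 b8 zab]]] := res_of_small z_int.
exists (res_pow4 d (Posz a, Posz b)); last first.
  rewrite (_ : z ^+ 4 = (z * z) * (z * z)); last by ring.
  by apply: res_of_mul; apply: res_of_mul.
rewrite mem_undup; apply: (allpairs_f (fun a b => res_pow4 d (Posz a, Posz b))).
  rewrite mem_filter mem_iota leq0n add0n a16 !andbT.
  apply/implyP => /z_unit/andP[z0 /eqP vz0].
  apply: contraT; rewrite -dvdn2 => a_even.
  have z1 : vge z 1.
    rewrite -(subrK (emb (Posz a, Posz b)) z); apply: (vgeD v_val (vgeW zab _)) => //.
    exact: (@vge_emb_even a b a_even).
  by have := vge_neq0 z0 z1; rewrite vz0.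
by rewrite mem_iota.
Qed.

Lemma quartic_sums_sound n (u : bool) (z : 'I_n -> K) :
  (forall i, vge (z i) 0) -> (u -> exists i, vunit (z i)) ->
  exists2 p, p \in quartic_sums d n u & res_of (\sum_i z i ^+ 4) p.
Proof.
elim: n u z => [|n IH] u z z_int z_unit.
  case: u z_unit => [/(_ isT)[[]] //|_].
  by exists (0, 0); rewrite ?inE // big_ord0 /res_of emb0 subr0; left.
rewrite big_ord_recl.
have split_res (u0 u' : bool) : (u0 -> vunit (z ord0)) ->
    (u' -> exists i, vunit (z (lift ord0 i))) ->
    exists2 p, p \in sumset (quartic_residues d u0) (quartic_sums d n u') &
      res_of (z ord0 ^+ 4 + \sum_i z (lift ord0 i) ^+ 4) p.
  move=> z0_unit z'_unit.
  have [p p_in zp] := quartic_residue_sound (z_int ord0) z0_unit.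
  have [q q_in zq] := IH u' _ (fun i => z_int (lift ord0 i)) z'_unit.
  by exists (res_add p q); [exact: sumset_add | exact: res_of_add].
case: u z_unit => [/(_ isT)[i zi_unit] | _] /=; last exact: split_res.
have [z0_unit | z0_nonunit] := boolP (vunit (z ord0)).
  have [//|//|p p_in zp] := split_res true false.
  by exists p; rewrite // mem_cat p_in.
case: (unliftP ord0 i) zi_unit => [i' -> zi'_unit | -> z0_unit]; last first.
  by rewrite z0_unit in z0_nonunit.
have [//||p p_in zp] := split_res false true; first by exists i'.
by exists p; rewrite // mem_cat p_in orbT.
Qed.

Lemma res_anisotropic_neq0 a m u b n w (y : 'I_m -> K) (z : 'I_n -> K) :
  res_anisotropic d a m u b n w ->
  (forall i, vge (y i) 0) -> (u -> exists i, vunit (y i)) ->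
  (forall i, vge (z i) 0) -> (w -> exists i, vunit (z i)) ->
  emb a * \sum_i y i ^+ 4 + emb b * \sum_i z i ^+ 4 != 0.
Proof.
move=> aniso y_int y_unit z_int z_unit; apply/eqP => form0.
have [p p_in yp] := quartic_sums_sound y_int y_unit.
have [q q_in zq] := quartic_sums_sound z_int z_unit.
have := res_of_add (res_of_mul (res_of_emb a) yp) (res_of_mul (res_of_emb b) zq).
rewrite form0 => /res_of0 pq0.
by move/hasPn: aniso => /(_ _ (sumset_add (map_f _ p_in) (map_f _ q_in))); rewrite pq0.
Qed.

Lemma GH_primitive_neq0 gam g g' (y : 'I_4 -> K) (z : 'I_6 -> K) :
  gam = emb g -> gam = pi * emb g' ->
  res_anisotropic d (1, 0) 4 true g 6 false ->
  res_anisotropic d (0, d) 4 false g' 6 true ->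
  (forall i, vge (y i) 0) -> (forall i, vge (z i) 0) ->
  (exists i, vunit (y i)) \/ (exists i, vunit (z i)) ->
  \sum_i y i ^+ 4 + gam * \sum_i z i ^+ 4 != 0.
Proof.
move=> eg eg' anisoG anisoH y_int z_int yz_unit.
have [/existsP[i yi_unit] | /existsPn y_nonunit] := boolP [exists i, vunit (y i)].
  rewrite -[X in X + _]mul1r (_ : 1 = emb (1, 0)); last by rewrite /emb /= mul0r addr0.
  by rewrite eg; apply: res_anisotropic_neq0 anisoG y_int _ z_int _ => // _; exists i.
have z_unit : exists i, vunit (z i).
  by case: yz_unit => // -[i yi_unit]; have := y_nonunit i; rewrite yi_unit.
pose w i := y i / pi.
have w_int i : vge (w i) 0.
  have pi_inv : vge pi^-1 (-1) by right; rewrite vV // v_pi.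
  exact: (vgeM v_val (vge_nonunit (y_int i) (y_nonunit i)) pi_inv).
have y_eq i : y i = w i * pi by rewrite divfK.
have GH_eq : \sum_i y i ^+ 4 + gam * \sum_i z i ^+ 4 =
    pi * (emb (0, d) * \sum_i w i ^+ 4 + emb g' * \sum_i z i ^+ 4).
  rewrite (eq_bigr _ (fun i _ => congr1 (fun t => t ^+ 4) (y_eq i))) sum_pow_scale eg'.
  by rewrite /emb /= mulr0z add0r -pi_sqr; ring.
rewrite GH_eq mulf_neq0 //.
by apply: res_anisotropic_neq0 anisoH w_int _ z_int (fun=> z_unit).
Qed.

End Ramified.

Lemma Gform_split (K : fieldType) (x : 'I_10 -> K) :
  Gform x = \sum_(i < 4) x (lshift 6 i) ^+ 4.
Proof.
rewrite /Gform big_mkcond (@big_split_ord _ _ _ 4 6) /=.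
rewrite [X in _ + X]big1 ?addr0 //.
by apply: eq_big => // i _; rewrite ltn_ord.
Qed.

Lemma Hform_split (K : fieldType) (x : 'I_10 -> K) :
  Hform x = \sum_(i < 6) x (rshift 4 i) ^+ 4.
Proof.
rewrite /Hform big_mkcond (@big_split_ord _ _ _ 4 6) /=.
rewrite [X in X + _]big1 ?add0r => [|i _]; last by rewrite leqNgt ltn_ord.
by apply: eq_big => // i _; rewrite leq_addr.
Qed.

Lemma GH_form_anisotropic (K : fieldType) (v : K -> int) (pi : K) (d : int)
    (gam : K) (g g' : res) :
  quad_ext_Q2 v pi d -> (exists k, d = 2 * (1 + 2 * k)) ->
  gam = emb pi g -> gam = pi * emb pi g' ->
  res_anisotropic d (1, 0) 4 true g 6 false ->
  res_anisotropic d (0, d) 4 false g' 6 true ->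
  ~ exists x, nontrivial_zero (fun y => Gform y + gam * Hform y) x.
Proof.
case=> v_val [res_F2 [_ [pi_neq0 [v_pi pi_sqr]]]] d_odd eg eg' anisoG anisoH.
case=> x [/= Fx0 [i0 xi0]]; have [j xj0 z_int] := exists_vmin_coord v_val xi0.
pose z i := x i / x j.
have z_unit : (exists i : 'I_4, vunit v (z (lshift 6 i))) \/
                (exists i : 'I_6, vunit v (z (rshift 4 i))).
  have : vunit v (z j) by rewrite /z divff // /vunit oner_neq0 (v1 v_val).
  by case: (@split 4 6 j) (@splitK 4 6 j) => k /= <- zk; [left | right]; exists k.
have := GH_primitive_neq0 v_val res_F2 pi_neq0 v_pi pi_sqr d_odd eg eg' anisoG anisoH
  (fun i => z_int _) (fun i => z_int _) z_unit.
by rewrite /z !sum_pow_scale -Gform_split -Hform_split mulrCA -mulrDr Fx0 mulr0 eqxx.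
Qed.

Theorem mainTheorem2 :
  (forall (K : fieldType) (v : K -> int) (pi : K) (d : int),
     (d = 2 \/ d = 10) -> quad_ext_Q2 v pi d ->
     ~ exists x : 'I_10 -> K,
         nontrivial_zero (fun y => Gform y + pi * Hform y) x) /\
  (forall (K : fieldType) (v : K -> int) (pi : K) (d : int),
     (d = -2 \/ d = -10) -> quad_ext_Q2 v pi d ->
     ~ exists x : 'I_10 -> K,
         nontrivial_zero (fun y => Gform y + (pi + pi ^+ 2) * Hform y) x).
Proof.
split=> K v pi d d_val Kv.
  apply: (GH_form_anisotropic (g := (0, 1)) (g' := (1, 0)) Kv).
  - by case: d_val => ->; [exists 0 | exists 2].
  - by rewrite /emb /= mul1r add0r.
  - by rewrite /emb /= mul0r addr0 mulr1.
  - by case: d_val => ->; vm_compute.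
  - by case: d_val => ->; vm_compute.
apply: (GH_form_anisotropic (g := (d, 1)) (g' := (1, 1)) Kv).
- by case: d_val => ->; [exists (-1) | exists (-3)].
- by case: Kv => _ [_ [_ [_ [_ pi_sqr]]]]; rewrite /emb /= -pi_sqr mul1r addrC.
- by rewrite /emb /= mul1r mulrDr mulr1 expr2.
- by case: d_val => ->; vm_compute.
- by case: d_val => ->; vm_compute.
Qed.
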